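(* Let $(E,\mathcal{E},m)$ be a $\sigma$-finite measure space and let $P$ be a stochastic operator on $L^1(E,\mathcal{E},m)$ which is uniquely mean ergodic with invariant density $f_*$. If a nonnegative measurable function $\tilde f_*$ is subinvariant for $P$ and $m(\operatorname{supp} f_*\cap\{x:\tilde f_*(x)<\infty\})>0$, then $\tilde f_*\in L^1$.
   Context: $L^1_+$ denotes the nonnegative elements of $L^1$, and $D(m)=\{f\in L^1_+:\|f\|=1\}$ is the set of densities. A linear operator $P$ on $L^1$ is stochastic if $P(D(m))\subseteq D(m)$. A substochastic (positive contraction) operator $P$ is extended to nonnegative measurable functions by $Pf=\sup_n Pf_n$ whenever $f=\sup_n f_n$ with $0\le f_n\le f_{n+1}$, $f_n\in L^1_+$ (the value may be $+\infty$). A nonnegative measurable $f$ is subinvariant for $P$ if $Pf\le f$. $P$ is uniquely mean ergodic if there is an invariant density $f_*$ ($Pf_*=f_*$) with $\lim_{N\to\infty}\frac1N\sum_{n=0}^{N-1}P^nf=f_*\|f\|$ for all $f\in L^1_+$. The support of $f$ is $\operatorname{supp} f=\{x: f(x)\neq0\}$ (up to null sets). *)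

From HB Require Import structures.
From mathcomp Require Import all_boot all_order all_algebra.
From mathcomp Require Import all_classical all_reals all_analysis measurable_realfun.
Set Implicit Arguments. Unset Strict Implicit. Unset Printing Implicit Defensive.
Import Order.TTheory GRing.Theory Num.Theory.
Local Open Scope classical_set_scope.
Local Open Scope ring_scope.

(* Elements of L^1(E, mu) are represented by their real-valued representatives
   f : T -> R with mu.-integrable setT (EFin \o f); equality in L^1 is a.e.
   equality.  An operator on L^1 is represented by a map P : (T -> R) -> (T -> R)
   which is only meaningful on integrable functions. *)

Section L1ops.
Context d (T : measurableType d) (R : realType) (mu : {measure set T -> \bar R}).

Definition L1 (f : T -> R) : Prop := mu.-integrable setT (EFin \o f).

Definition L1norm (f : T -> R) : R := fine (\int[mu]_x (`|f x|)%:E).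

Definition L1pos (f : T -> R) : Prop := L1 f /\ {ae mu, forall x, 0 <= f x}.

Definition density (f : T -> R) : Prop := L1pos f /\ L1norm f = 1.

Definition L1_linear_operator (P : (T -> R) -> (T -> R)) : Prop :=
  [/\ (forall f, L1 f -> L1 (P f)),
      (forall f g, L1 f -> L1 g -> f = g %[ae mu] -> P f = P g %[ae mu]) &
      (forall (a b : R) f g, L1 f -> L1 g ->
          P (fun x => a * f x + b * g x) = (fun x => a * P f x + b * P g x) %[ae mu])].

Definition stochastic (P : (T -> R) -> (T -> R)) : Prop :=
  L1_linear_operator P /\ (forall f, density f -> density (P f)).

Definition cesaro (P : (T -> R) -> (T -> R)) (N : nat) (f : T -> R) : T -> R :=
  fun x => N%:R^-1 * \sum_(n < N) iter n P f x.

Definition uniquely_mean_ergodic_with (P : (T -> R) -> (T -> R)) (fstar : T -> R) : Prop :=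
  [/\ density fstar,
      P fstar = fstar %[ae mu] &
      (forall f, L1pos f ->
         (fun N : nat => L1norm (fun x => cesaro P N.+1 f x - fstar x * L1norm f))
            @ \oo --> 0)].

(* Extension of P to nonnegative measurable functions: for an increasing sequence
   fs of elements of L^1_+, the value at x of sup_n P (fs n). *)
Definition ext_sup (P : (T -> R) -> (T -> R)) (fs : nat -> T -> R) (x : T) : \bar R :=
  ereal_sup (range (fun n => (P (fs n) x)%:E)).

Definition approx_seq (fs : nat -> T -> R) (f : T -> \bar R) : Prop :=
  [/\ (forall n, L1pos (fs n)),
      (forall n, {ae mu, forall x, fs n x <= fs n.+1 x}) &
      {ae mu, forall x, ereal_sup (range (fun n => (fs n x)%:E)) = f x}].

(* f (nonnegative measurable, possibly infinite) is subinvariant: P f <= f, where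
   P f := sup_n P f_n for an increasing sequence f_n in L^1_+ with f = sup_n f_n
   (the value does not depend on the chosen sequence). *)
Definition subinvariant (P : (T -> R) -> (T -> R)) (f : T -> \bar R) : Prop :=
  exists fs, approx_seq fs f /\ {ae mu, forall x, (ext_sup P fs x <= f x)%E}.

End L1ops.

From Pilot Require Import Defs.
From HB Require Import structures.
From mathcomp Require Import all_boot all_order all_algebra.
From mathcomp Require Import all_classical all_reals all_analysis measurable_realfun.
From mathcomp Require Import lra.
Import Order.TTheory GRing.Theory Num.Theory.
Local Open Scope classical_set_scope.
Local Open Scope ring_scope.
Set Implicit Arguments. Unset Strict Implicit.

(* Write [fs] for an increasing sequence in L^1_+ with supremum [F] and
   [P fs_n <= F].  Truncations [min(g, fs_n)] converge to [g] in L^1 for any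
   [g] in L^1_+ below [F], and [P] is an L^1-isometry on ordered pairs, so
   [P g <= F] as well: the set of [g] in L^1_+ below [F] is [P]-invariant.
   Hence all Cesaro averages of [fs_n] lie below [F], and so does their
   L^1-limit [f_* ||fs_n||].  At a point [x] with [0 < f_*(x)] and
   [F(x) < oo] this gives the uniform bound [||fs_n|| <= F(x) / f_*(x)],
   and monotone convergence yields [\int F < oo]. *)

Lemma cvg_minr_nondecreasing (R : realType) (a : R) (v : nat -> R) :
  (forall n, v n <= v n.+1) -> (a%:E <= ereal_sup (range (EFin \o v)))%E ->
  (fun n => (Num.min a (v n))%:E) @ \oo --> a%:E.
Proof.
move=> v_nd a_le_sup; apply: cvg_EFin; first by near=> n.
apply/cvgrPdist_lt => e e_gt0.
have [n0 vn0] : exists n0, a - e < v n0.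
  apply: contrapT => v_small.
  have : (ereal_sup (range (EFin \o v)) <= (a - e)%:E)%E.
    apply: ge_ereal_sup => _ [n _ <-]; rewrite lee_fin leNgt.
    by apply/negP => vn; apply: v_small; exists n.
  by move=> /(le_trans a_le_sup); rewrite lee_fin; lra.
near=> n.
have vn : v n0 <= v n.
  by apply: (nondecreasing_seqP v).1 v_nd _ _ _; near: n; exists n0.
rewrite /=; have [av|va] := leP a (v n); first by rewrite subrr normr0.
rewrite ger0_norm; lra.
Unshelve. all: by end_near. Qed.

Section L1_functions.
Context d (T : measurableType d) (R : realType) (mu : {measure set T -> \bar R}).

Lemma L1_measurable (f : T -> R) : L1 mu f -> measurable_fun setT f.
Proof. by move=> /integrableP[/measurable_EFinP]. Qed.

Lemma L1_abse_measurable (f : T -> R) : L1 mu f ->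
  measurable_fun setT (fun x => (`|f x|)%:E).
Proof. by move=> /L1_measurable mf; apply/measurable_EFinP/measurableT_comp. Qed.

Lemma L1_comb (a b : R) (f g : T -> R) : L1 mu f -> L1 mu g ->
  L1 mu (fun x => a * f x + b * g x).
Proof.
move=> Lf Lg; rewrite /L1.
have := integrableD measurableT (integrableZl measurableT a Lf)
  (integrableZl measurableT b Lg).
by congr (_.-integrable _ _); apply/funext => x /=; rewrite EFinD !EFinM.
Qed.

Lemma L1_scale (k : R) (f : T -> R) : L1 mu f -> L1 mu (fun x => k * f x).
Proof.
by move=> Lf; have := L1_comb k 0 Lf Lf; under eq_fun do rewrite mul0r addr0.
Qed.

Lemma L1_sub (f g : T -> R) : L1 mu f -> L1 mu g -> L1 mu (fun x => f x - g x).
Proof.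
by move=> Lf Lg; have := L1_comb 1 (-1) Lf Lg; under eq_fun do rewrite mul1r mulN1r.
Qed.

Lemma L1_minr (f g : T -> R) : L1 mu f -> L1 mu g ->
  L1 mu (fun x => Num.min (f x) (g x)).
Proof.
move=> Lf Lg.
have Lsum : L1 mu (fun x => 1 * `|f x| + 1 * `|g x|).
  exact: L1_comb (integrable_abse Lf) (integrable_abse Lg).
apply: (le_integrable measurableT _ _ Lsum).
  by apply/measurable_EFinP/measurable_minr; exact: L1_measurable.
move=> x _ /=; rewrite lee_fin !mul1r [X in _ <= X]ger0_norm ?addr_ge0 //.
by have [_|_] := leP (f x) (g x); rewrite ?lerDl ?lerDr.
Qed.

Lemma L1normE (f : T -> R) : L1 mu f ->
  (L1norm mu f)%:E = (\int[mu]_x (`|f x|)%:E)%E.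
Proof.
by move=> /integrableP[_ fin]; rewrite fineK // ge0_fin_numE ?integral_ge0.
Qed.

Lemma L1norm_ge0 (f : T -> R) : 0 <= L1norm mu f.
Proof. exact/fine_ge0/integral_ge0. Qed.

Lemma L1norm_ae_eq (f g : T -> R) : L1 mu f -> L1 mu g ->
  {ae mu, forall x, f x = g x} -> L1norm mu f = L1norm mu g.
Proof.
move=> Lf Lg fg; rewrite /L1norm (ae_eq_integral (fun x => (`|g x|)%:E)) //.
- exact: L1_abse_measurable.
- exact: L1_abse_measurable.
- by apply: filterS fg => x ->.
Qed.

Lemma L1norm_eq0 (f : T -> R) : L1 mu f -> L1norm mu f = 0 ->
  {ae mu, forall x, f x = 0}.
Proof.
move=> Lf f0.
have mf : measurable_fun setT (EFin \o f) by exact/measurable_EFinP/L1_measurable.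
have := (ae_eq_integral_abs mu measurableT mf).1; rewrite -L1normE // f0.
by move=> /(_ erefl); apply: filterS => x /(_ I) [].
Qed.

Lemma L1normZ (k : R) (f : T -> R) : L1 mu f ->
  L1norm mu (fun x => k * f x) = `|k| * L1norm mu f.
Proof.
move=> Lf; rewrite /L1norm.
under eq_integral do rewrite normrM EFinM.
rewrite ge0_integralZl //; last exact: L1_abse_measurable.
by rewrite -(L1normE Lf) -EFinM.
Qed.

(* The positive part of [h - F] has integral at most [||h - u_N||] for
   every [N], hence vanishes. *)
Lemma ae_le_of_L1_approx (F : T -> \bar R) (h : T -> R) (u : nat -> T -> R) :
  measurable_fun setT F -> measurable_fun setT h ->
  (forall N, measurable_fun setT (u N)) ->
  (forall N, {ae mu, forall x, ((u N x)%:E <= F x)%E}) ->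
  (forall e : R, 0 < e -> exists N,
     (\int[mu]_x (`|h x - u N x|)%:E <= e%:E)%E) ->
  {ae mu, forall x, ((h x)%:E <= F x)%E}.
Proof.
move=> mF mh mu_ uF hu.
pose phi x := maxe ((h x)%:E - F x)%E 0%E.
have mphi : measurable_fun setT phi.
  by apply/measurable_maxe/measurable_cst/emeasurable_funB => //;
    exact/measurable_EFinP.
have phi_ge0 x : (0 <= phi x)%E by rewrite /phi le_max lexx orbT.
have phi_le N : (\int[mu]_x phi x <= \int[mu]_x (`|h x - u N x|)%:E)%E.
  apply: ae_ge0_le_integral => //.
    exact/measurable_EFinP/measurableT_comp/measurable_funB.
  apply: filterS (uF N) => x ux _.
  rewrite /phi ge_max lee_fin normr_ge0 andbT.
  move: ux; case: (F x) => [r| |] //=; last by rewrite leNye.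
  by rewrite !lee_fin => ur; rewrite (le_trans _ (ler_norm _)) // lerB.
have int_phi0 : (\int[mu]_x `|phi x| = 0)%E.
  under eq_integral do rewrite gee0_abs //.
  apply/eqP; rewrite eq_le integral_ge0 // andbT.
  apply/lee_addgt0Pr => e e_gt0; rewrite add0e.
  by have [N HN] := hu e e_gt0; exact: le_trans (phi_le N) HN.
have := (ae_eq_integral_abs _ measurableT mphi).1 int_phi0.
apply: filterS => x /(_ I) /eqP; rewrite eq_le ge_max => /andP[/andP[+ _] _].
by rewrite sube_le0.
Qed.

Lemma approx_seq_le (fs : nat -> T -> R) (F : T -> \bar R) n :
  approx_seq mu fs F -> {ae mu, forall x, ((fs n x)%:E <= F x)%E}.
Proof.
case=> _ _; apply: filterS => x <-.
by apply: ereal_sup_ubound; exists n.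
Qed.

Lemma L1_approx_minr (fs : nat -> T -> R) (F : T -> \bar R) (g : T -> R) :
  approx_seq mu fs F -> L1pos mu g -> {ae mu, forall x, ((g x)%:E <= F x)%E} ->
  forall e, 0 < e -> exists N,
    (\int[mu]_x (`|g x - Num.min (g x) (fs N x)|)%:E <= e%:E)%E.
Proof.
move=> [fsL fs_nd fs_sup] [Lg g_ge0] gF e e_gt0.
pose gm n x := Num.min (g x) (fs n x).
have gm_cvg : {ae mu, forall x, setT x ->
    (fun n => (EFin \o gm n) x) @ \oo --> (EFin \o g) x}.
  apply: filterS3 (ae_foralln fs_nd) fs_sup gF => x nd sup_eq gx _.
  by apply: cvg_minr_nondecreasing => //; rewrite sup_eq.
have gm_dom : {ae mu, forall x n, setT x ->
    (`|(EFin \o gm n) x| <= (EFin \o (fun y => `|g y|%R)) x)%E}.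
  apply: filterS2 (ae_foralln (fun n => (fsL n).2)) g_ge0 => x fs_ge0 gx n _ /=.
  by rewrite lee_fin !ger0_norm ?le_min ?gx ?fs_ge0 // ge_min lexx.
have mgm n : measurable_fun setT (EFin \o gm n).
  by apply/measurable_EFinP/measurable_minr; apply: L1_measurable; [|case: (fsL n)].
have mg : measurable_fun setT (EFin \o g) by exact/measurable_EFinP/L1_measurable.
have [_ int_cvg _] := dominated_convergence measurableT mgm mg gm_cvg
  (integrable_abse Lg) gm_dom.
set u := [sequence _]_n in int_cvg.
have /cvgr_dist_lt/(_ e e_gt0) near_small : fine \o u @ \oo --> 0 by exact: fine_cvg.
have : \forall n \near \oo, `|0 - (fine \o u) n| < e /\ u n \is a fin_num.
  by apply: filterS2 near_small (cvg_is_fine int_cvg) => n.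
move=> /filter_ex[N [small fin]].
have uE : u N = (\int[mu]_x (`|g x - gm N x|)%:E)%E.
  by apply: eq_integral => x _; rewrite /= distrC.
exists N; rewrite -uE -(fineK fin) lee_fin.
by rewrite sub0r normrN in small; apply: le_trans (ler_norm _) (ltW small).
Qed.

Lemma approx_seq_integrable (fs : nat -> T -> R) (F : T -> \bar R) (M : R) :
  measurable_fun setT F -> (forall x, (0 <= F x)%E) -> approx_seq mu fs F ->
  (forall n, L1norm mu (fs n) <= M) -> mu.-integrable setT F.
Proof.
move=> mF F_ge0 [fsL fs_nd fs_sup] fs_bound.
pose good x := [/\ (forall n, fs n x <= fs n.+1 x), (forall n, 0 <= fs n x)
  & ereal_sup (range (fun n => (fs n x)%:E)) = F x].
have [N [mN N0 badN]] : {ae mu, forall x, good x}.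
  apply: filterS3 (ae_foralln fs_nd) (ae_foralln (fun n => (fsL n).2)) fs_sup.
  by move=> x; split.
have goodD y : (setT `\` N) y -> good y.
  by move=> [_ Ny]; apply: contrapT => /badN.
have mD : measurable (setT `\` N) := measurableD measurableT mN.
have mfs n : measurable_fun (setT `\` N) (fun y => (fs n y)%:E).
  by apply/measurable_funTS/measurable_EFinP; case: (fsL n) => /L1_measurable.
have fs_ge0 n y : (setT `\` N) y -> (0 <= (fs n y)%:E)%E.
  by move=> /goodD[_ + _]; rewrite lee_fin.
have fs_homo y : (setT `\` N) y ->
    {homo (fun n => (fs n y)%:E) : a b / (a <= b)%N >-> (a <= b)%E}.
  move=> /goodD[nd _ _] a b ab; rewrite lee_fin.
  exact: (nondecreasing_seqP _).1 nd _ _ ab.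
apply/integrableP; split => //.
under eq_integral do rewrite gee0_abs //.
rewrite (ge0_negligible_integral mN measurableT mF (fun y _ => F_ge0 y) N0).
rewrite (eq_integral (fun y => limn (fun n => (fs n y)%:E))); last first.
  move=> y /[!inE] Dy; have [_ _ <-] := goodD y Dy.
  by apply/esym/cvg_lim => //; exact: ereal_nondecreasing_cvgn (fs_homo y Dy).
rewrite (monotone_convergence mu mD mfs fs_ge0 fs_homo).
apply: (le_lt_trans _ (ltry M)); apply: lime_le.
  apply: ereal_nondecreasing_is_cvgn => a b ab.
  by apply: ge0_le_integral => //; [exact: fs_ge0|move=> y Dy; exact: fs_homo].
apply: nearW => n; case: (fsL n) => Lfn _.
apply: (@le_trans _ _ (\int[mu]_(y in setT `\` N) (`|fs n y|)%:E)%E).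
  apply: ge0_le_integral => //; first exact: fs_ge0.
    exact/measurable_funTS/(L1_abse_measurable Lfn).
  by move=> y _; rewrite lee_fin ler_norm.
apply: (@le_trans _ _ (\int[mu]_y (`|fs n y|)%:E)%E).
  by apply: ge0_subset_integral => //; exact: L1_abse_measurable.
by rewrite -L1normE // lee_fin.
Qed.

Lemma ae_exists_in (A : set T) (Q : T -> Prop) : measurable A ->
  (0 < mu A)%E -> {ae mu, forall x, Q x} -> exists x, A x /\ Q x.
Proof.
move=> mA A_gt0 [N [mN N0 notQN]].
apply: contrapT => noA; move: A_gt0.
suff -> : mu A = 0%E by rewrite ltxx.
apply: subset_measure0 mA mN _ N0 => x Ax; apply: contrapT => Nx.
by apply: noA; exists x; split=> //; apply: contrapT => /notQN.
Qed.

End L1_functions.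

Section stochastic_operator.
Context d (T : measurableType d) (R : realType) (mu : {measure set T -> \bar R}).
Variable P : (T -> R) -> (T -> R).
Hypothesis stochP : stochastic mu P.

Lemma stochastic_L1 f : L1 mu f -> L1 mu (P f).
Proof. by case: stochP => -[PL1 _ _] _; exact: PL1. Qed.

Lemma stochastic_ae_eq f g : L1 mu f -> L1 mu g ->
  {ae mu, forall x, f x = g x} -> {ae mu, forall x, P f x = P g x}.
Proof.
case: stochP => -[_ Pae _] _ Lf Lg fg.
have /(Pae f g Lf Lg) : f = g %[ae mu] by apply: filterS fg => x ->.
by apply: filterS => x /(_ I).
Qed.

Lemma stochastic_comb (a b : R) f g : L1 mu f -> L1 mu g ->
  {ae mu, forall x, P (fun y => a * f y + b * g y) x = a * P f x + b * P g x}.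
Proof.
case: stochP => -[_ _ Plin] _ Lf Lg.
by apply: filterS (Plin a b f g Lf Lg) => x /(_ I).
Qed.

Lemma stochastic_scale (k : R) f : L1 mu f ->
  {ae mu, forall x, P (fun y => k * f y) x = k * P f x}.
Proof.
move=> Lf; have kfE : (fun y => k * f y + 0 * f y) = (fun y => k * f y).
  by apply/funext => y; rewrite mul0r addr0.
by apply: filterS (stochastic_comb k 0 Lf Lf) => x; rewrite kfE mul0r addr0.
Qed.

Lemma stochastic_sub f g : L1 mu f -> L1 mu g ->
  {ae mu, forall x, P (fun y => f y - g y) x = P f x - P g x}.
Proof.
move=> Lf Lg; have fgE : (fun y => 1 * f y + -1 * g y) = (fun y => f y - g y).
  by apply/funext => y; rewrite mul1r mulN1r.
by apply: filterS (stochastic_comb 1 (-1) Lf Lg) => x; rewrite fgE mul1r mulN1r.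
Qed.

(* [f / ||f||] is a density, so [P] preserves positivity and norm by scaling. *)
Lemma stochastic_L1pos f : L1pos mu f ->
  L1pos mu (P f) /\ L1norm mu (P f) = L1norm mu f.
Proof.
move=> [Lf f_ge0]; have LPf := stochastic_L1 Lf.
have := L1norm_ge0 mu f; rewrite le_eqVlt => /predU1P[f_norm0|f_norm_gt0].
  have Pf0 : {ae mu, forall x, P f x = 0 * P f x}.
    have f0 : {ae mu, forall x, f x = 0 * f x}.
      by apply: filterS (L1norm_eq0 Lf (esym f_norm0)) => x ->; rewrite mul0r.
    apply: filterS2 (stochastic_ae_eq Lf (L1_scale 0 Lf) f0) (stochastic_scale 0 Lf).
    by move=> x -> ->; rewrite !mul0r.
  split; first by split => //; apply: filterS Pf0 => x ->; rewrite mul0r.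
  by rewrite -f_norm0 (L1norm_ae_eq LPf (L1_scale 0 LPf) Pf0) L1normZ // normr0 mul0r.
set c := L1norm mu f in f_norm_gt0 *.
pose h x := c^-1 * f x.
have Lh : L1 mu h := L1_scale _ Lf.
have h_density : density mu h.
  split; first split => //.
    by apply: filterS f_ge0 => x fx; rewrite mulr_ge0 // invr_ge0 ltW.
  by rewrite L1normZ // ger0_norm ?invr_ge0 ?(ltW f_norm_gt0) // mulVf // gt_eqF.
have [[LPh Ph_ge0] Ph_norm] := stochP.2 h h_density.
have PfE : {ae mu, forall x, P f x = c * P h x}.
  apply: filterS (stochastic_scale c^-1 Lf) => x ->.
  by rewrite mulrA mulfV ?mul1r // gt_eqF.
split; first split => //.
  by apply: filterS2 PfE Ph_ge0 => x -> hx; rewrite mulr_ge0 // ltW.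
rewrite (L1norm_ae_eq LPf (L1_scale c LPh) PfE) L1normZ // Ph_norm mulr1.
by rewrite ger0_norm // ltW.
Qed.

Lemma stochastic_ler f g : L1 mu f -> L1 mu g -> {ae mu, forall x, f x <= g x} ->
  {ae mu, forall x, P f x <= P g x}.
Proof.
move=> Lf Lg fg; have Lgf := L1_sub Lg Lf.
have gf_pos : L1pos mu (fun y => g y - f y).
  by split => //; apply: filterS fg => x; rewrite subr_ge0.
have [[_ Pgf_ge0] _] := stochastic_L1pos gf_pos.
by apply: filterS2 (stochastic_sub Lg Lf) Pgf_ge0 => x ->; rewrite subr_ge0.
Qed.

Lemma stochastic_dist f g : L1 mu f -> L1 mu g -> {ae mu, forall x, f x <= g x} ->
  (\int[mu]_x (`|P g x - P f x|)%:E = \int[mu]_x (`|g x - f x|)%:E)%E.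
Proof.
move=> Lf Lg fg; have Lgf := L1_sub Lg Lf.
have gf_pos : L1pos mu (fun y => g y - f y).
  by split => //; apply: filterS fg => x; rewrite subr_ge0.
have [_ Pgf_norm] := stochastic_L1pos gf_pos.
have PgPf : L1 mu (fun x => P g x - P f x) by apply: L1_sub; exact: stochastic_L1.
rewrite -!L1normE // -Pgf_norm; congr (_%:E); apply/esym/L1norm_ae_eq => //.
  exact: stochastic_L1.
exact: stochastic_sub.
Qed.

Lemma stochastic_iter_L1pos k f : L1pos mu f -> L1pos mu (iter k P f).
Proof. by elim: k => [|k IH] // /IH /stochastic_L1pos[]. Qed.

Lemma cesaro_L1 N f : L1 mu f -> L1 mu (Defs.cesaro P N f).
Proof.
move=> Lf; apply: L1_scale; elim: N => [|N IH].
  by under eq_fun do rewrite big_ord0; exact: integrable0.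
have -> : (fun x => \sum_(k < N.+1) iter k P f x) =
    (fun x => 1 * \sum_(k < N) iter k P f x + 1 * iter N P f x).
  by apply/funext => x; rewrite big_ord_recr !mul1r.
apply: L1_comb IH _; elim: N => [|N IHN] //=; exact: stochastic_L1.
Qed.

Section subinvariant_function.
Variables (fs : nat -> T -> R) (F : T -> \bar R).
Hypothesis mF : measurable_fun setT F.
Hypothesis approx_fs : approx_seq mu fs F.
Hypothesis sub_fs : {ae mu, forall x, (ext_sup P fs x <= F x)%E}.

Lemma subinvariant_approx_le n : {ae mu, forall x, ((P (fs n) x)%:E <= F x)%E}.
Proof.
by apply: filterS sub_fs => x; apply: le_trans; apply: ereal_sup_ubound; exists n.
Qed.

Lemma subinvariant_le g : L1pos mu g -> {ae mu, forall x, ((g x)%:E <= F x)%E} ->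
  {ae mu, forall x, ((P g x)%:E <= F x)%E}.
Proof.
move=> g_pos gF; have [Lg _] := g_pos; have [fsL _ _] := approx_fs.
pose gm n x := Num.min (g x) (fs n x).
have Lgm n : L1 mu (gm n) by apply: L1_minr => //; case: (fsL n).
apply: (ae_le_of_L1_approx (u := fun n => P (gm n))) => //.
- exact/L1_measurable/stochastic_L1.
- by move=> N; exact/L1_measurable/stochastic_L1.
- move=> N; have [LfsN _] := fsL N.
  have gm_le : {ae mu, forall x, gm N x <= fs N x}.
    by apply: aeW => x; rewrite ge_min lexx orbT.
  apply: filterS2 (stochastic_ler (Lgm N) LfsN gm_le) (subinvariant_approx_le N).
  by move=> x Pgm_le; apply: le_trans; rewrite lee_fin.
move=> e e_gt0; have [N small] := L1_approx_minr approx_fs g_pos gF e_gt0.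
exists N; rewrite stochastic_dist //.
by apply: aeW => x; rewrite ge_min lexx.
Qed.

Lemma subinvariant_iter_le n k :
  {ae mu, forall x, ((iter k P (fs n) x)%:E <= F x)%E}.
Proof.
have [fsL _ _] := approx_fs.
elim: k => [|k IH]; first exact: approx_seq_le.
exact/subinvariant_le/IH/stochastic_iter_L1pos.
Qed.

Lemma subinvariant_cesaro_le n N :
  {ae mu, forall x, ((Defs.cesaro P N.+1 (fs n) x)%:E <= F x)%E}.
Proof.
apply: filterS (ae_foralln (subinvariant_iter_le n)) => x iter_le.
move: (iter_le 0%N); case Fx : (F x) => [r| |] //= _; last by rewrite leey.
rewrite lee_fin /Defs.cesaro ler_pdivrMl ?ltr0n //.
have -> : N.+1%:R * r = \sum_(k < N.+1) r by rewrite sumr_const card_ord mulr_natl.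
apply: ler_sum => k _.
by have := iter_le k; rewrite Fx lee_fin.
Qed.

Lemma subinvariant_density_le fstar : uniquely_mean_ergodic_with mu P fstar ->
  forall n, {ae mu, forall x, ((fstar x * L1norm mu (fs n))%:E <= F x)%E}.
Proof.
move=> [[[Lfstar _] _] _ mean_erg] n; have [fsL _ _] := approx_fs.
have [Lfs _] := fsL n; set c := L1norm mu (fs n).
apply: (ae_le_of_L1_approx (u := fun N => Defs.cesaro P N.+1 (fs n))) => //.
- exact: measurable_funM (L1_measurable Lfstar) (measurable_cst _).
- by move=> N; exact/L1_measurable/cesaro_L1.
- exact: subinvariant_cesaro_le.
move=> e e_gt0.
have /cvgr_dist_lt/(_ e e_gt0)/filter_ex[N small] := mean_erg _ (fsL n).
exists N; rewrite (eq_integral (fun x =>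
  (`|Defs.cesaro P N.+1 (fs n) x - fstar x * c|)%:E)); last first.
  by move=> x _; rewrite distrC.
rewrite -L1normE; last first.
  by apply: L1_sub; [exact: cesaro_L1|under eq_fun do rewrite mulrC; exact: L1_scale].
rewrite lee_fin sub0r normrN in small *.
exact: le_trans (ler_norm _) (ltW small).
Qed.

End subinvariant_function.
End stochastic_operator.

Unset Implicit Arguments.
Local Open Scope ereal_scope.

Theorem proposition2p1 (d : measure_display) (T : measurableType d) (R : realType)
  (mu : {measure set T -> \bar R}) (P : (T -> R) -> (T -> R))
  (fstar : T -> R) (ftilde : T -> \bar R) :
  sigma_finite setT mu ->
  stochastic mu P ->
  uniquely_mean_ergodic_with mu P fstar ->
  measurable_fun setT ftilde ->
  (forall x, 0 <= ftilde x) ->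
  subinvariant mu P ftilde ->
  0 < mu ([set x | fstar x != 0%R] `&` [set x | ftilde x < +oo]) ->
  mu.-integrable setT ftilde.
Proof.
move=> _ stochP erg mF F_ge0 [fs [approx_fs sub_fs]] supp_gt0.
have [[[Lfstar fstar_ge0] _] _ _] := erg.
have msupp : measurable ([set x | fstar x != 0%R] `&` [set x | ftilde x < +oo]).
  apply: measurableI; rewrite -[X in measurable X]setTI.
    rewrite (_ : [set x | _] = [set x | (fstar x)%:E != 0]).
      exact: emeasurable_neq measurableT ((measurable_EFinP _ _).2 (L1_measurable Lfstar)) 0.
    by apply/seteqP; split => x /=; rewrite eqe.
  exact: measurable_lte.
have fstar_le := ae_foralln (subinvariant_density_le stochP mF approx_fs sub_fs erg).
have : {ae mu, forall x, (forall n, (fstar x * L1norm mu (fs n))%:E <= ftilde x)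
    /\ (0 <= fstar x)%R} by apply: filterS2 fstar_le fstar_ge0.
move=> /(ae_exists_in msupp supp_gt0)[x [[/= fx_neq0 Fx_fin] [fx_le fx_ge0]]].
have fx_gt0 : (0 < fstar x)%R by rewrite lt_neqAle eq_sym fx_neq0.
apply: (approx_seq_integrable (M := ((fstar x)^-1 * fine (ftilde x))%R) mF F_ge0 approx_fs).
by move=> n; rewrite ler_pdivlMl // -lee_fin fineK ?ge0_fin_numE.
Qed.
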